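(* Let $q$ be an odd prime power, $s \ge 2$ even, and let $E,F\subset\mathbb{F}_q^s$ satisfy $\# E \le \# F$ and $(\# E)(\# F) \ge 900q^s$. Then \[ \left|\sigma_{E, F}(0)\right|^2 = q^{-3s} \nu(0)^2 + O\left(q^{-3s-1}(\#E)^2(\# F)^2\right). \]
   Context: $\mathbb{F}_q$ is the finite field with $q$ elements, $q$ odd. Fix a nontrivial additive character $\psi$ of $\mathbb{F}_q$. For $f:\mathbb{F}_q^s\to\mathbb{C}$, $\hat f(\mathbf{x})=q^{-s}\sum_{\mathbf{m}\in\mathbb{F}_q^s}\psi(-\mathbf{m}\cdot\mathbf{x})f(\mathbf{m})$. Sets are identified with their indicator functions. $|\mathbf{x}|^2=\sum_ix_i^2$. $\sigma_{E,F}(0)=\sum_{\mathbf{m}\in\mathbb{F}_q^s:|\mathbf{m}|^2=0}\overline{\hat E(\mathbf{m})}\hat F(\mathbf{m})$, and $\nu(0)=\#\{(\mathbf{x},\mathbf{y})\in E\times F:|\mathbf{x}-\mathbf{y}|^2=0\}$. The implied $O$-constant depends only on $s$. *)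

From HB Require Import structures.
From mathcomp Require Import all_boot all_order all_algebra all_field.
Set Implicit Arguments. Unset Strict Implicit. Unset Printing Implicit Defensive.
Import Order.TTheory GRing.Theory Num.Theory.
Local Open Scope ring_scope.

Section Defs.
Variables (K : finFieldType) (s : nat).

Definition dotv (x y : 'rV[K]_s) : K := \sum_(i < s) x 0 i * y 0 i.
Definition normsq (x : 'rV[K]_s) : K := dotv x x.

Definition is_add_char (psi : K -> algC) : Prop :=
  psi 0 = 1 /\ forall x y, psi (x + y) = psi x * psi y.
Definition nontrivial_char (psi : K -> algC) : Prop := exists x, psi x != 1.

(* \hat f(m) = q^{-s} sum_x psi(-m.x) f(x), f the indicator of E *)
Definition fourier (psi : K -> algC) (E : {set 'rV[K]_s}) (m : 'rV[K]_s) : algC :=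
  ((#|K| ^ s)%:R)^-1 * \sum_(x in E) psi (- dotv m x).

Definition sigma0 (psi : K -> algC) (E F : {set 'rV[K]_s}) : algC :=
  \sum_(m : 'rV[K]_s | normsq m == 0) (fourier psi E m)^* * fourier psi F m.

Definition nu0 (E F : {set 'rV[K]_s}) : nat :=
  #|[set p in setX E F | normsq (p.1 - p.2) == 0]|.
End Defs.

(* Writing q = #|K|, orthogonality of psi turns sigma_{E,F}(0) into
   q^(-2s) times the sum over (x, y) in E x F of S(x - y), where
   S(z) = sum_{|m|^2 = 0} psi(m . z).  Detecting |m|^2 = 0 by a second
   character sum over t and completing the square factors S(z) into Gauss
   sums G(t) = sum_x psi(t x^2); since G(t) G(-t) = q and G(-t) = +-G(t),
   G(t)^2 = +-q, so for even s every G(t)^s equals Gamma = (+-q)^(s/2), with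
   Gamma^2 = q^s.  This yields the exact identity
     q^(2s+1) sigma_{E,F}(0) = q^s #(E n F) + Gamma (q nu(0) - #E #F).
   Squaring, the difference with q^(-3s) nu(0)^2 is a sum of terms bounded via
   #(E n F) <= #E and |Gamma| <= #F, the latter because q^s <= #E #F <= #F^2. *)

From HB Require Import structures.
From mathcomp Require Import all_boot all_order all_algebra all_field all_fingroup cyclic.
From mathcomp Require Import ring lra zify.
Import Order.TTheory GRing.Theory Num.Theory FinRing.Theory.
Set Implicit Arguments.
Unset Strict Implicit.
Unset Printing Implicit Defensive.
Local Open Scope ring_scope.

Lemma mulrn_card (V : finZmodType) (x : V) : x *+ #|V| = 0.
Proof. by rewrite -zmodXgE -cardsT expg_cardG ?inE. Qed.

Lemma two_neq0_odd_card (K : finFieldType) : odd #|K| -> (2 : K) != 0.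
Proof.
move=> oddK; apply/eqP=> two0; move/eqP: (@mulrn_card K 1); apply/negP.
by rewrite -(odd_double_half #|K|) oddK -mul2n mulrnDr mulrnA two0 mul0rn addr0 oner_eq0.
Qed.

Lemma four_neq0_odd_card (K : finFieldType) : odd #|K| -> (4 : K) != 0.
Proof. by move=> oddK; rewrite (natrM K 2 2) mulf_neq0 // two_neq0_odd_card. Qed.

Lemma sum_indicator (R : pzSemiRingType) (T : finType) (A : {set T}) (P : pred T) :
  \sum_(x in A) ((P x)%:R : R) = #|[set x in A | P x]|%:R.
Proof.
rewrite -sum1_card natr_sum (eq_bigl [pred x | (x \in A) && P x]) => [|x]; last by rewrite inE.
by rewrite big_mkcondr /=; apply: eq_bigr => x _; case: (P x).
Qed.

Lemma card_diag_setX (T : finType) (E F : {set T}) :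
  #|[set p in setX E F | p.1 == p.2]| = #|E :&: F|.
Proof.
have -> : [set p in setX E F | p.1 == p.2] = [set (x, x) | x in E :&: F].
  apply/setP => -[x y]; rewrite !inE /=.
  apply/andP/imsetP => [[/andP [xE yF] /eqP exy] | [z]].
    by rewrite -exy in yF *; exists x; rewrite ?inE ?xE.
  by rewrite inE => /andP [zE zF] [-> ->]; rewrite zE zF.
by rewrite card_imset // => x y [].
Qed.

Section SquareRoots.
Variable K : finFieldType.

Definition nsqrt (y : K) : nat := #|[pred x : K | x ^+ 2 == y]|.

Lemma sum_sqr_nsqrt (V : nmodType) (f : K -> V) :
  \sum_(x : K) f (x ^+ 2) = \sum_(y : K) f y *+ nsqrt y.
Proof.
transitivity (\sum_(x : K) \sum_(y : K | x ^+ 2 == y) f y).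
  by apply: eq_bigr => x _; rewrite (big_pred1 (x ^+ 2)) // => y; rewrite /= eq_sym.
rewrite (exchange_big_dep xpredT) //=; apply: eq_bigr => y _.
by rewrite sumr_const.
Qed.

Lemma sum_nsqrt : (\sum_(y : K) nsqrt y)%N = #|K|.
Proof.
symmetry; rewrite -sum1_card (partition_big (fun x : K => x ^+ 2) xpredT) //=.
by apply: eq_bigr => y _; rewrite sum1_card.
Qed.

Lemma nsqrt_le2 (y : K) : (nsqrt y <= 2)%N.
Proof.
rewrite /nsqrt; case: (pickP [pred x : K | x ^+ 2 == y]) => [a /eqP ha | none].
  have sub : [pred x : K | x ^+ 2 == y] \subset pred2 a (- a).
    by apply/subsetP => x; rewrite !inE -ha eqf_sqr.
  by apply: leq_trans (subset_leq_card sub) _; rewrite card2; case: (_ != _).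
by rewrite (eq_card0 none).
Qed.

Lemma nsqrt0 : nsqrt 0 = 1%N.
Proof. by rewrite -(card1 (0 : K)); apply: eq_card => x; rewrite !inE sqrf_eq0. Qed.

Hypothesis nonsq_m1 : ~~ [exists c : K, c ^+ 2 == -1].

Lemma nsqrt_eq0_or_nsqrtN_eq0 (y : K) : y != 0 -> nsqrt y = 0%N \/ nsqrt (- y) = 0%N.
Proof.
move=> y_neq0; rewrite /nsqrt.
case: (pickP [pred x : K | x ^+ 2 == y]) => [a /eqP ha | none]; last by left; apply: eq_card0.
case: (pickP [pred x : K | x ^+ 2 == - y]) => [b /eqP hb | none]; last by right; apply: eq_card0.
have a_neq0 : a != 0 by apply: contraNneq y_neq0 => a0; rewrite -ha a0 expr0n.
case/negP: nonsq_m1; apply/existsP; exists (b / a).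
by rewrite expr_div_n hb ha mulNr divff // -ha expf_neq0.
Qed.

(* At most one of y, -y is a nonzero square, so each pair has at most two
   square roots in total; the counts add up to 2 #|K|, forcing equality. *)
Lemma nsqrt_addN (y : K) : (nsqrt y + nsqrt (- y))%N = 2%N.
Proof.
have le2 z : (nsqrt z + nsqrt (- z) <= 2)%N.
  have [->|z_neq0] := eqVneq z 0; first by rewrite oppr0 nsqrt0.
  by case: (nsqrt_eq0_or_nsqrtN_eq0 z_neq0) => ->; rewrite ?addn0 nsqrt_le2.
have total : (\sum_(z : K) (nsqrt z + nsqrt (- z)))%N = (\sum_(z : K) 2)%N.
  rewrite big_split /= sum_nsqrt (reindex_inj oppr_inj) /=.
  by under eq_bigr do rewrite opprK; rewrite sum_nsqrt sum_nat_const cardT -cardE muln2 addnn.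
have [_] := leqif_sum (fun z (_ : true) => leqif_eq (le2 z)).
by rewrite total eqxx => /esym/forall_inP/(_ y isT)/eqP.
Qed.
End SquareRoots.

Section AdditiveCharacter.
Variables (K : finFieldType) (psi : K -> algC).
Hypothesis psi_char : is_add_char psi.

Lemma addchar0 : psi 0 = 1. Proof. by case: psi_char. Qed.

Lemma addcharD x y : psi (x + y) = psi x * psi y. Proof. by case: psi_char. Qed.

Lemma addchar_sum (I : finType) (P : pred I) (f : I -> K) :
  psi (\sum_(i | P i) f i) = \prod_(i | P i) psi (f i).
Proof. exact: (big_morph psi addcharD addchar0). Qed.

Lemma addcharMn x n : psi (x *+ n) = psi x ^+ n.
Proof. by elim: n => [|n IHn]; rewrite ?addchar0 // mulrS exprS addcharD IHn. Qed.

Lemma addcharN_mul x : psi (- x) * psi x = 1.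
Proof. by rewrite -addcharD addNr addchar0. Qed.

Lemma norm_addchar x : `|psi x| = 1.
Proof.
apply/eqP; rewrite -(pexpr_eq1 (n := #|K|)) ?normr_ge0 //; last exact: ltnW (finNzRing_gt1 K).
by rewrite -normrX -addcharMn mulrn_card addchar0 normr1.
Qed.

Lemma conj_addchar x : (psi x)^* = psi (- x).
Proof.
have psix_neq0 : psi x != 0 by rewrite -normr_eq0 norm_addchar oner_eq0.
by apply: (mulfI psix_neq0); rewrite -normCK norm_addchar expr1n mulrC addcharN_mul.
Qed.

Definition gauss_sum (t : K) : algC := \sum_(x : K) psi (t * x ^+ 2).

Lemma gauss_sumM_sqr t c : c != 0 -> gauss_sum (t * c ^+ 2) = gauss_sum t.
Proof.
move=> c_neq0; rewrite /gauss_sum [RHS](reindex_inj (mulIf c_neq0)) /=.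
by apply: eq_bigr => x _; congr psi; ring.
Qed.

Hypothesis psi_nontrivial : nontrivial_char psi.

Lemma sum_addchar : \sum_(y : K) psi y = 0.
Proof.
case: psi_nontrivial => x0 psix0_neq1.
have shift : \sum_(y : K) psi y = psi x0 * \sum_(y : K) psi y.
  by rewrite mulr_sumr (reindex_inj (addrI x0)) /=; apply: eq_bigr => y _; rewrite addcharD.
apply/eqP; move/eqP: shift; rewrite -subr_eq0 -{1}(mul1r (\sum_y psi y)) -mulrBl mulf_eq0.
by rewrite subr_eq0 eq_sym (negbTE psix0_neq1).
Qed.

Lemma sum_addcharM a : \sum_(t : K) psi (t * a) = (a == 0)%:R * #|K|%:R.
Proof.
have [->|a_neq0] := eqVneq a 0.
  rewrite mul1r; under eq_bigr do rewrite mulr0 addchar0.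
  by rewrite sumr_const cardT -cardE.
rewrite mul0r (reindex_inj (mulIf (invr_neq0 a_neq0))) /= -[RHS]sum_addchar.
by apply: eq_bigr => y _; rewrite mulfVK.
Qed.

Hypothesis odd_card : odd #|K|.

Lemma gauss_sumN_mul t : t != 0 -> gauss_sum t * gauss_sum (- t) = #|K|%:R.
Proof.
move=> t_neq0; rewrite /gauss_sum big_distrl /=.
under eq_bigr do rewrite big_distrr /=.
rewrite exchange_big /=.
(* Substituting x = y + u leaves sum_u psi(t u^2) sum_y psi(2 t u y), and
   orthogonality in y kills every u <> 0. *)
have shift (y : K) : \sum_(x : K) psi (t * x ^+ 2) * psi (- t * y ^+ 2)
    = \sum_(u : K) psi (t * u ^+ 2) * psi (y * (2 * t * u)).
  rewrite (reindex_inj (addrI y)) /=; apply: eq_bigr => u _.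
  by rewrite -!addcharD; congr psi; ring.
under eq_bigr do rewrite shift.
rewrite exchange_big /=.
under eq_bigr do rewrite -mulr_sumr sum_addcharM.
rewrite (bigD1 0) //= big1 ?addr0 => [|u u_neq0].
  by rewrite expr0n mulr0 addchar0 mulr0 eqxx !mul1r.
have two_neq0 := two_neq0_odd_card odd_card.
by rewrite !mulf_eq0 (negbTE u_neq0) (negbTE t_neq0) (negbTE two_neq0) !mul0r mulr0.
Qed.

Lemma gauss_sum_addN t : ~~ [exists c : K, c ^+ 2 == -1] -> t != 0 ->
  gauss_sum t + gauss_sum (- t) = 0.
Proof.
move=> nonsq_m1 t_neq0.
rewrite /gauss_sum (sum_sqr_nsqrt (fun y => psi (t * y))) (sum_sqr_nsqrt (fun y => psi (- t * y))).
rewrite [X in _ + X](reindex_inj oppr_inj) /= -big_split /=.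
under eq_bigr do rewrite mulrNN -mulrnDr nsqrt_addN // mulrC.
by rewrite sumrMnl sum_addcharM (negbTE t_neq0) mul0r mul0rn.
Qed.

Definition gauss_sign : int := if [exists c : K, c ^+ 2 == -1] then 1 else -1.

Lemma gauss_sum_sqr t : t != 0 -> gauss_sum t ^+ 2 = gauss_sign%:~R * #|K|%:R.
Proof.
move=> t_neq0; rewrite /gauss_sign; case: ifP => [/existsP [c /eqP c2] | /negbT nonsq_m1].
  have c_neq0 : c != 0 by apply: contra_eq_neq c2 => ->; rewrite expr0n eq_sym oppr_eq0 oner_eq0.
  by rewrite expr2 -{2}(gauss_sumM_sqr t c_neq0) c2 mulrN1 gauss_sumN_mul // mul1r.
have Gt : gauss_sum t = - gauss_sum (- t) by apply/eqP; rewrite -addr_eq0 gauss_sum_addN.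
by rewrite expr2 {2}Gt mulrN gauss_sumN_mul // mulN1r.
Qed.
End AdditiveCharacter.

Section IsotropicSums.
Variables (K : finFieldType) (psi : K -> algC) (s : nat).
Hypothesis psi_char : is_add_char psi.
Implicit Types (x y z m : 'rV[K]_s) (E F : {set 'rV[K]_s}).

Definition isotropic_sum z : algC := \sum_(m | normsq m == 0) psi (dotv m z).

Definition quadratic_sum (t : K) z : algC := \sum_m psi (t * normsq m + dotv m z).

Lemma dotvBr m x y : dotv m (x - y) = dotv m x - dotv m y.
Proof. by rewrite /dotv -sumrB; apply: eq_bigr => i _; rewrite !mxE mulrBr. Qed.

Lemma sigma0_isotropic_sum E F : sigma0 psi E F =
  ((#|K| ^ s)%:R ^+ 2)^-1 * \sum_(p in setX E F) isotropic_sum (p.1 - p.2).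
Proof.
rewrite /sigma0 /fourier /isotropic_sum; set c : algC := ((#|K| ^ s)%:R)^-1.
transitivity (\sum_(m | normsq m == 0)
    c ^+ 2 * \sum_(p in setX E F) psi (dotv m (p.1 - p.2))).
  apply: eq_bigr => m _; rewrite rmorphM /= fmorphV rmorph_nat mulrACA -expr2.
  congr (_ * _); rewrite rmorph_sum big_distrl /=.
  under eq_bigr do rewrite big_distrr /=.
  rewrite pair_big /=; apply: eq_big => [p | p _]; first by rewrite !inE.
  by rewrite conj_addchar // opprK -addcharD // dotvBr.
by rewrite -mulr_sumr exchange_big /c exprVn.
Qed.

Lemma quadratic_sum_prod t z :
  quadratic_sum t z = \prod_(i < s) \sum_(a : K) psi (t * a ^+ 2 + a * z 0 i).
Proof.
rewrite bigA_distr_bigA /= /quadratic_sum.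
pose row_of (f : {ffun 'I_s -> K}) : 'rV[K]_s := \row_i f i.
have row_of_bij : bijective row_of.
  exists (fun m : 'rV[K]_s => [ffun i => m 0 i]).
    by move=> f; apply/ffunP => i; rewrite ffunE mxE.
  by move=> m; apply/rowP => i; rewrite mxE ffunE.
rewrite (reindex row_of) /=; last exact: onW_bij.
apply: eq_bigr => f _; rewrite -addchar_sum //; congr psi.
rewrite /normsq /dotv mulr_sumr -big_split /=.
by apply: eq_bigr => i _; rewrite !mxE expr2.
Qed.

Hypothesis psi_nontrivial : nontrivial_char psi.

(* Orthogonality in t detects the quadric [normsq m = 0]. *)
Lemma isotropic_sum_quadratic z :
  isotropic_sum z = (#|K|%:R)^-1 * \sum_(t : K) quadratic_sum t z.
Proof.
have q_neq0 : #|K|%:R != 0 :> algC by rewrite pnatr_eq0 -lt0n (ltnW (finNzRing_gt1 K)).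
rewrite /isotropic_sum /quadratic_sum big_mkcond /= exchange_big /= mulr_sumr.
apply: eq_bigr => m _; under eq_bigr do rewrite addcharD //.
rewrite -mulr_suml sum_addcharM //; case: (normsq m == 0).
  by rewrite mul1r mulrA mulVf // mul1r.
by rewrite !mul0r mulr0.
Qed.

Lemma quadratic_sum0 z : quadratic_sum 0 z = (z == 0)%:R * (#|K| ^ s)%:R.
Proof.
rewrite quadratic_sum_prod.
under eq_bigr do under eq_bigr do rewrite mul0r add0r.
under eq_bigr do rewrite sum_addcharM //.
have [->|z_neq0] := eqVneq z 0.
  by under eq_bigr do rewrite mxE eqxx mul1r; rewrite prodr_const card_ord natrX mul1r.
have [i zi_neq0] : exists i, z 0 i != 0.
  apply/existsP; rewrite -negb_forall; apply: contra z_neq0 => /forallP z0.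
  by apply/eqP/rowP => i; rewrite mxE; apply/eqP.
by rewrite (bigD1 i) //= (negbTE zi_neq0) !mul0r.
Qed.

Hypothesis odd_card : odd #|K|.

Lemma sum_complete_square t c : t != 0 ->
  \sum_(a : K) psi (t * a ^+ 2 + a * c) = psi (- (4 * t)^-1 * c ^+ 2) * gauss_sum psi t.
Proof.
move=> t_neq0; have two_neq0 := two_neq0_odd_card odd_card.
rewrite (reindex_inj (addrI (- c / (2 * t)))) /gauss_sum mulr_sumr /=.
apply: eq_bigr => a _; rewrite -addcharD //; congr psi.
by field; rewrite t_neq0 two_neq0 four_neq0_odd_card.
Qed.

Lemma quadratic_sum_neq0 t z : t != 0 ->
  quadratic_sum t z = gauss_sum psi t ^+ s * psi (- (4 * t)^-1 * normsq z).
Proof.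
move=> t_neq0; rewrite quadratic_sum_prod.
under eq_bigr do rewrite sum_complete_square //.
rewrite big_split /= prodr_const card_ord mulrC -addchar_sum //; congr (_ * psi _).
by rewrite /normsq /dotv mulr_sumr; apply: eq_bigr => i _; rewrite expr2.
Qed.

Lemma sum_addchar_inv (N : K) :
  \sum_(t : K | t != 0) psi (- (4 * t)^-1 * N) = (N == 0)%:R * #|K|%:R - 1.
Proof.
pose g (t : K) := - (4 * t)^-1.
have gK : involutive g.
  by move=> t; rewrite /g mulrN invrN opprK invfM invrK mulKf ?four_neq0_odd_card.
have sum_g : \sum_(t : K) psi (g t * N) = (N == 0)%:R * #|K|%:R.
  rewrite -(sum_addcharM psi_char psi_nontrivial) (reindex_inj (inv_inj gK)) /=.
  by apply: eq_bigr => t _; rewrite gK.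
by rewrite -sum_g [in RHS](bigD1 0) //= {1}/g mulr0 invr0 oppr0 mul0r addchar0 // [1 + _]addrC addrK.
Qed.

Hypothesis s_even : ~~ odd s.

Definition gauss_power : int := (gauss_sign K * #|K|%:Z) ^+ s./2.

Lemma sqr_gauss_power : gauss_power ^+ 2 = (#|K| ^ s)%:Z.
Proof.
have sign2 : gauss_sign K ^+ 2 = 1 by rewrite /gauss_sign; case: ifP.
rewrite /gauss_power -exprM exprMn mulnC exprM sign2 expr1n mul1r.
by rewrite mul2n (even_halfK s_even) -[RHS]natz natrX natz.
Qed.

Lemma gauss_sum_exp t : t != 0 -> gauss_sum psi t ^+ s = gauss_power%:~R.
Proof.
move=> t_neq0; rewrite -(even_halfK s_even) -mul2n exprM gauss_sum_sqr //.
by rewrite /gauss_power rmorphXn rmorphM.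
Qed.

Lemma isotropic_sum_closed z : isotropic_sum z = (#|K|%:R)^-1 *
  ((z == 0)%:R * (#|K| ^ s)%:R + gauss_power%:~R * ((normsq z == 0)%:R * #|K|%:R - 1)).
Proof.
rewrite isotropic_sum_quadratic (bigD1 0) //= quadratic_sum0; congr (_ * (_ + _)).
under eq_bigr => t t_neq0 do rewrite quadratic_sum_neq0 // gauss_sum_exp //.
by rewrite -mulr_sumr sum_addchar_inv.
Qed.

Lemma sigma0_closed E F : sigma0 psi E F = ((#|K| ^ (2 * s + 1))%:R)^-1 *
  ((#|K| ^ s)%:Z * #|E :&: F|%:Z
   + gauss_power * (#|K|%:Z * (nu0 E F)%:Z - #|E|%:Z * #|F|%:Z))%:~R.
Proof.
have q_neq0 : #|K|%:R != 0 :> algC by rewrite pnatr_eq0 -lt0n (ltnW (finNzRing_gt1 K)).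
set Q : algC := #|K|%:R; set G : algC := gauss_power%:~R.
have split_sum (p : 'rV[K]_s * 'rV[K]_s) : isotropic_sum (p.1 - p.2) =
    Q^-1 * (#|K| ^ s)%:R * (p.1 == p.2)%:R + G * (normsq (p.1 - p.2) == 0)%:R - Q^-1 * G.
  by rewrite isotropic_sum_closed subr_eq0 -/Q -/G; field.
rewrite sigma0_isotropic_sum (eq_bigr _ (fun p _ => split_sum p)) sumrB big_split /=.
rewrite -!mulr_sumr !sum_indicator card_diag_setX sumr_const cardsX.
rewrite -[G *+ _]mulr_natr intrD !intrM intrB !intrM -!pmulrn -/(nu0 E F) !natrM !natrX.
rewrite -/Q -/G exprD expr1 mulnC exprM.
by field; rewrite q_neq0 expf_neq0.
Qed.
End IsotropicSums.

Lemma main_term_bound (R : realDomainType) (a g d n e f q : R) :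
  a = g ^+ 2 -> g ^+ 2 <= f ^+ 2 -> 0 <= f -> 0 <= d -> d <= e -> 0 <= n -> n <= e * f ->
  1 <= q ->
  `|(a * d + g * (q * n - e * f)) ^+ 2 - a * q ^+ 2 * n ^+ 2| <= 6 * a * q * e ^+ 2 * f ^+ 2.
Proof.
move=> -> gf f0 d0 de n0 nef q1.
have gf' : `|g| <= f by rewrite -(ler_pXn2r (_ : 0 < 2)%N) ?nnegrE ?normr_ge0 // real_normK ?num_real.
set u := g * d; set v := q * n; set w := e * f.
have e0 : 0 <= e by lra.
have w0 : 0 <= w by rewrite mulr_ge0.
have uw : `|u| <= w by rewrite /u /w normrM (ger0_norm d0) mulrC ler_pM ?normr_ge0.
have v0 : 0 <= v by rewrite mulr_ge0 //; lra.
have vw : v <= q * w by rewrite /v /w ler_pM2l //; lra.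
have -> : (g ^+ 2 * d + g * (q * n - e * f)) ^+ 2 - g ^+ 2 * q ^+ 2 * n ^+ 2
    = g ^+ 2 * (u ^+ 2 + 2 * u * (v - w) + w ^+ 2 - 2 * v * w) by rewrite /u /v /w; ring.
have -> : 6 * g ^+ 2 * q * e ^+ 2 * f ^+ 2 = g ^+ 2 * (6 * q * w ^+ 2) by rewrite /w; ring.
rewrite normrM ger0_norm ?sqr_ge0 // ler_wpM2l ?sqr_ge0 //.
move: uw; rewrite ler_norml => /andP [uw1 uw2].
rewrite ler_norml; apply/andP; split; nra.
Qed.

Lemma norm_sqr_scaled_bound (R : numFieldType) (A q n e f : nat) (X : int) :
  (0 < A)%N -> (0 < q)%N ->
  `|X ^+ 2 - A%:Z * q%:Z ^+ 2 * n%:Z ^+ 2| <= 6 * A%:Z * q%:Z * e%:Z ^+ 2 * f%:Z ^+ 2 ->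
  `| `|((A ^ 2 * q)%N%:R)^-1 * X%:~R| ^+ 2 - ((A ^ 3)%N%:R)^-1 * n%:R ^+ 2 : R|
    <= 6 * ((A ^ 3 * q)%N%:R)^-1 * e%:R ^+ 2 * f%:R ^+ 2.
Proof.
move=> A_gt0 q_gt0; rewrite !expr2 -(ler_int R) intr_norm intrB !intrM -!pmulrn -!expr2.
rewrite !natrM; set a : R := A%:R; set c : R := q%:R.
have a_neq0 : a != 0 by rewrite pnatr_eq0 -lt0n.
have c_neq0 : c != 0 by rewrite pnatr_eq0 -lt0n.
have scale_ge0 : 0 <= (a ^+ 4 * c ^+ 2)^-1 by rewrite invr_ge0 mulr_ge0 ?exprn_ge0 ?ler0n.
have sqr_norm : `|(a * a * c)^-1 * X%:~R| ^+ 2 = ((a * a * c)^-1 * X%:~R) ^+ 2.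
  by rewrite real_normK // realM ?realz // ger0_real // invr_ge0 !mulr_ge0 ?ler0n.
move=> bound; rewrite sqr_norm.
have -> : ((a * a * c)^-1 * X%:~R) ^+ 2 - (a * (a * a))^-1 * n%:R ^+ 2
    = (a ^+ 4 * c ^+ 2)^-1 * (X%:~R ^+ 2 - a * c ^+ 2 * n%:R ^+ 2) by field; rewrite a_neq0 c_neq0.
rewrite normrM (ger0_norm scale_ge0); apply: le_trans (ler_wpM2l scale_ge0 bound) _.
rewrite le_eqVlt; apply/orP; left; apply/eqP.
by field; rewrite a_neq0 c_neq0.
Qed.

Lemma nu0_le (K : finFieldType) (s : nat) (E F : {set 'rV[K]_s}) :
  (nu0 E F <= #|E| * #|F|)%N.
Proof. by rewrite -cardsX; apply/subset_leq_card/subsetP => p; rewrite inE => /andP []. Qed.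

Theorem lemma8 (s : nat) (hs2 : (2 <= s)%N) (hseven : ~~ odd s) :
  exists C : algC, 0 <= C /\
  forall (K : finFieldType) (psi : K -> algC),
    is_add_char psi -> nontrivial_char psi -> odd #|K| ->
    forall E F : {set 'rV[K]_s},
      (#|E| <= #|F|)%N ->
      (900 * #|K| ^ s <= #|E| * #|F|)%N ->
      `| `|sigma0 psi E F| ^+ 2
         - ((#|K| ^ (3 * s))%:R)^-1 * ((nu0 E F)%:R) ^+ 2 |
      <= C * ((#|K| ^ (3 * s + 1))%:R)^-1 * (#|E|%:R) ^+ 2 * (#|F|%:R) ^+ 2.
Proof.
exists 6; split => // K psi psi_char psi_nontrivial odd_card E F le_EF large.
have q_gt0 : (0 < #|K|)%N := ltnW (finNzRing_gt1 K).
have exp_mul k : (#|K| ^ (k * s + 1) = (#|K| ^ s) ^ k * #|K|)%N.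
  by rewrite addn1 expnS mulnC (mulnC k) expnM.
have exp_3s : (#|K| ^ (3 * s) = (#|K| ^ s) ^ 3)%N by rewrite -expnM mulnC.
rewrite sigma0_closed // !exp_mul exp_3s.
apply: norm_sqr_scaled_bound; rewrite ?expn_gt0 ?q_gt0 //.
apply: main_term_bound; rewrite ?sqr_gauss_power ?lez_nat ?nu0_le //.
- move: large; set A := (#|K| ^ s)%N; set e := #|E|; set f := #|F|; nia.
- exact/subset_leq_card/subsetIl.
Qed.
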